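(* Let $\mathbf{A}\in\mathbb{R}^{M\times N}$, $M=m\prod_{j=1}^L\ell_j$, $N=n\prod_{j=1}^Lq_j$, have the multilevel block structure \[\mathbf{A}=\sum_{i_1=1}^{p_1}\cdots\sum_{i_L=1}^{p_L}\mathbf{E}^{(1)}_{i_1}\otimes\cdots\otimes\mathbf{E}^{(L)}_{i_L}\otimes\sqrt{\eta^{(1)}_{i_1}\cdots\eta^{(L)}_{i_L}}\,\mathbf{A}^{(i_1,\dots,i_L)}\] described in the context, and let $\mathcal{T}_{\mathcal{E}}[\mathbf{A}]$ and $\mathcal{M}_{\mathcal{E}}$ be as defined there. Let $\widehat{\mathcal{T}}_{\mathcal{E}}[\mathbf{A}]\in\mathbb{R}^{m\times p_1\times\cdots\times p_L\times n}$ be any tensor (an approximation of $\mathcal{T}_{\mathcal{E}}[\mathbf{A}]$). Then \[\big\|\mathbf{A}-\mathcal{M}_{\mathcal{E}}[\widehat{\mathcal{T}}_{\mathcal{E}}[\mathbf{A}]]\big\|_F=\big\|\mathcal{T}_{\mathcal{E}}[\mathbf{A}]-\widehat{\mathcal{T}}_{\mathcal{E}}[\mathbf{A}]\big\|_F.\]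
   Context: For each level $j=1,\dots,L$ there are $p_j$ matrices $\mathbf{E}^{(j)}_1,\dots,\mathbf{E}^{(j)}_{p_j}\in\mathbb{R}^{\ell_j\times q_j}$ ($1\le p_j\le\ell_jq_j$), where $\mathbf{E}^{(j)}_k$ has entries in $\{0,1/\sqrt{\eta^{(j)}_k}\}$, $\eta^{(j)}_k\ge1$ is its number of nonzero entries, and the supports of $\mathbf{E}^{(j)}_k$ for distinct $k$ are disjoint (they record the positions of repeated blocks at level $j$). $\mathbf{A}^{(i_1,\dots,i_L)}\in\mathbb{R}^{m\times n}$ are the non-redundant blocks at the lowest level; $\mathcal{E}=(\mathcal{E}^{(1)},\dots,\mathcal{E}^{(L)})$ with $\mathcal{E}^{(j)}=(\mathbf{E}^{(j)}_1,\dots,\mathbf{E}^{(j)}_{p_j})$. The Kronecker product $\mathbf{B}\otimes\mathbf{C}$ has $(i,j)$ block $b_{ij}\mathbf{C}$. The tensor $\mathcal{T}_{\mathcal{E}}[\mathbf{A}]\in\mathbb{R}^{m\times p_1\times\cdots\times p_L\times n}$ has entries $(\mathcal{T}_{\mathcal{E}}[\mathbf{A}])_{a,i_1,\dots,i_L,b}=\sqrt{\eta^{(1)}_{i_1}\cdots\eta^{(L)}_{i_L}}\,(\mathbf{A}^{(i_1,\dots,i_L)})_{ab}$. For $\mathcal{X}\in\mathbb{R}^{m\times p_1\times\cdots\times p_L\times n}$, let $\mathrm{sq}(\mathcal{X}_{:,i_1,\dots,i_L,:})$ be the $m\times n$ matrix with $(a,b)$ entry $\mathcal{X}_{a,i_1,\dots,i_L,b}$,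 and $\mathcal{M}_{\mathcal{E}}[\mathcal{X}]=\sum_{i_1=1}^{p_1}\cdots\sum_{i_L=1}^{p_L}\mathbf{E}^{(1)}_{i_1}\otimes\cdots\otimes\mathbf{E}^{(L)}_{i_L}\otimes\mathrm{sq}(\mathcal{X}_{:,i_1,\dots,i_L,:})$. The Frobenius norm of a tensor is the square root of the sum of squares of its entries. *)

From HB Require Import structures.
From mathcomp Require Import all_boot all_order all_algebra.
From mathcomp Require Import reals.
Set Implicit Arguments. Unset Strict Implicit. Unset Printing Implicit Defensive.
Import Order.TTheory GRing.Theory Num.Theory.
Local Open Scope ring_scope.

Definition midx (L : nat) (d : 'I_L -> nat) := {dffun forall j : 'I_L, 'I_(d j)}.

(* This is exactly the row/column index structure of an iterated Kronecker
   product E1 (x) ... (x) EL (x) C (lexicographic order of the multi-index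
   gives the usual integer row index in [0, m * prod l_j)). *)
Definition bigmx (R : Type) (L : nat) (l q : 'I_L -> nat) (m n : nat) :=
  midx l * 'I_m -> midx q * 'I_n -> R.

Definition kronL (R : pzRingType) (L : nat) (l q : 'I_L -> nat) (m n : nat)
  (B : forall j : 'I_L, 'M[R]_(l j, q j)) (C : 'M[R]_(m, n)) : bigmx R l q m n :=
  fun r c => (\prod_(j : 'I_L) B j (r.1 j) (c.1 j)) * C r.2 c.2.

Definition nnz (R : pzRingType) (a b : nat) (E : 'M[R]_(a, b)) : nat :=
  #|[set x : 'I_a * 'I_b | E x.1 x.2 != 0]|.

Definition tensor (R : Type) (L : nat) (p : 'I_L -> nat) (m n : nat) :=
  'I_m -> midx p -> 'I_n -> R.

Section Ops.
Variables (R : rcfType) (L : nat) (l q p : 'I_L -> nat) (m n : nat).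
Variable E : forall j : 'I_L, 'I_(p j) -> 'M[R]_(l j, q j).

Definition etaE {j : 'I_L} (k : 'I_(p j)) : nat := nnz (@E j k).

Definition sqrt_eta (i : midx p) : R :=
  Num.sqrt (\prod_(j : 'I_L) (etaE (i j))%:R).

Definition sq (X : tensor R p m n) (i : midx p) : 'M[R]_(m, n) :=
  \matrix_(a < m, b < n) X a i b.

Definition T_E (Ablk : midx p -> 'M[R]_(m, n)) : tensor R p m n :=
  fun a i b => sqrt_eta i * Ablk i a b.

Definition M_E (X : tensor R p m n) : bigmx R l q m n :=
  fun r c => \sum_(i : midx p) kronL (fun j => @E j (i j)) (sq X i) r c.
End Ops.

Definition frob_mx (R : rcfType) (L : nat) (l q : 'I_L -> nat) (m n : nat)
  (A : bigmx R l q m n) : R :=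
  Num.sqrt (\sum_(r : midx l * 'I_m) \sum_(c : midx q * 'I_n) A r c ^+ 2).

Definition frob_tensor (R : rcfType) (L : nat) (p : 'I_L -> nat) (m n : nat)
  (X : tensor R p m n) : R :=
  Num.sqrt (\sum_(a : 'I_m) \sum_(i : midx p) \sum_(b : 'I_n) X a i b ^+ 2).

From HB Require Import structures.
From mathcomp Require Import all_boot all_order all_algebra.
From mathcomp Require Import reals.
Import Order.TTheory GRing.Theory Num.Theory.
Local Open Scope ring_scope.

(* The residual A - M_E[That] is the sum over multi-indices i of the Kronecker
   products (E_{i_1} (x) ... (x) E_{i_L}) (x) (T_E[A] - That)_{:,i,:}.  Distinct
   i give Kronecker factors with disjoint supports, so the squared Frobenius norm
   of the sum is the sum of the squared norms; and each factor has unit norm,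
   because every E^(j)_k has eta entries equal to 1/sqrt eta and zeros elsewhere. *)

Section SquaredFrobenius.
Variable R : comNzRingType.

Definition frob2 {X Z : finType} (B : X -> Z -> R) : R := \sum_x \sum_z B x z ^+ 2.

Lemma sum_dffun_prod (I : finType) (T_ : I -> finType) (F : forall i, T_ i -> R) :
  \sum_(f : {dffun forall i : I, T_ i}) \prod_i F i (f i) =
  \prod_i \sum_(x : T_ i) F i x.
Proof.
have -> : \prod_i \sum_(x : T_ i) F i x =
          \prod_i \sum_(x : T_ i) [ffun y => F i y] x.
  by apply: eq_bigr => i _; apply: eq_bigr => x _; rewrite ffunE.
under eq_bigr => i _ do
  rewrite (big_tag (fun i => [ffun y => F i y] : {ffun T_ i -> R}) i).
rewrite bigA_distr_big_dep -big_fprod.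
rewrite (reindex (@fprod_of_dffun _ T_)); last exact/onW_bij/fprod_of_dffun_bij.
apply: eq_bigr => f _; apply: eq_bigr => i _.
by rewrite ffunE /fprod_of_dffun fprodE.
Qed.

Lemma frob2_prod (I : finType) (X Z : I -> finType)
    (B : forall i, X i -> Z i -> R) :
  frob2 (fun (x : {dffun forall i : I, X i}) (z : {dffun forall i : I, Z i}) =>
           \prod_i B i (x i) (z i))
  = \prod_i frob2 (B i).
Proof.
rewrite /frob2 -sum_dffun_prod; apply: eq_bigr => x _.
rewrite -sum_dffun_prod; apply: eq_bigr => z _.
by rewrite prodrXl.
Qed.

Lemma frob2_kron (X Y Z W : finType) (F : X -> Z -> R) (G : Y -> W -> R) :
  frob2 (fun (r : X * Y) (c : Z * W) => F r.1 c.1 * G r.2 c.2)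
  = frob2 F * frob2 G.
Proof.
rewrite /frob2.
transitivity (\sum_x \sum_y \sum_z \sum_w F x z ^+ 2 * G y w ^+ 2).
  rewrite [RHS]pair_bigA; apply: eq_bigr => r _.
  by rewrite pair_bigA; apply: eq_bigr => c _; rewrite exprMn.
rewrite big_distrl; apply: eq_bigr => x _.
rewrite big_distrl exchange_big; apply: eq_bigr => z _.
rewrite big_distrr; apply: eq_bigr => y _.
by rewrite big_distrr.
Qed.

Lemma sqr_sum_orth (I : finType) (a : I -> R) :
  (forall i k, i != k -> a i * a k = 0) -> (\sum_i a i) ^+ 2 = \sum_i a i ^+ 2.
Proof.
move=> orth; rewrite expr2 mulr_suml; apply: eq_bigr => i _.
rewrite mulr_sumr (bigD1 i) //= big1 ?addr0 // => k ki.
by rewrite orth // eq_sym.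
Qed.

Lemma frob2_sum_kron_orth (I X Y Z W : finType)
    (P : I -> X -> Z -> R) (Q : I -> Y -> W -> R) :
  (forall i k x z, i != k -> P i x z * P k x z = 0) ->
  frob2 (fun (r : X * Y) (c : Z * W) => \sum_i P i r.1 c.1 * Q i r.2 c.2)
  = \sum_i frob2 (P i) * frob2 (Q i).
Proof.
move=> orthP.
transitivity (\sum_i frob2 (fun (r : X * Y) (c : Z * W) => P i r.1 c.1 * Q i r.2 c.2)).
  rewrite /frob2 [RHS]exchange_big; apply: eq_bigr => r _.
  rewrite [RHS]exchange_big; apply: eq_bigr => c _.
  by apply: sqr_sum_orth => i k ik; rewrite mulrACA orthP // mul0r.
by apply: eq_bigr => i _; rewrite frob2_kron.
Qed.

Lemma prod_disjoint_supports (I : finType) (K X Z : I -> finType)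
    (B : forall i, K i -> X i -> Z i -> R)
    (disjB : forall i k k' x z, k != k' -> B i k x z * B i k' x z = 0)
    (s t : {dffun forall i : I, K i}) (x : {dffun forall i : I, X i})
    (z : {dffun forall i : I, Z i}) :
  s != t -> (\prod_i B i (s i) (x i) (z i)) * (\prod_i B i (t i) (x i) (z i)) = 0.
Proof.
move=> st; have [i sti | /(_ _)/negbFE/eqP s_eq_t] := pickP (fun i => s i != t i).
  by rewrite -big_split (bigD1 i) //= disjB // mul0r.
by case/eqP: st; apply/ffunP => i; apply: s_eq_t.
Qed.

End SquaredFrobenius.

Arguments frob2 {R X Z} B.

Lemma frob2_unit_pattern (R : rcfType) (a b : nat) (E : 'M[R]_(a, b)) :
  (0 < nnz E)%N ->
  (forall x y, E x y = 0 \/ E x y = 1 / Num.sqrt (nnz E)%:R) ->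
  frob2 (fun x y => E x y) = 1.
Proof.
move=> nnz_gt0 hE; rewrite /frob2 pair_bigA /=.
rewrite (bigID (fun xy => E xy.1 xy.2 != 0)) /=.
rewrite [X in _ + X]big1 ?addr0; last by move=> xy /negPn/eqP ->; rewrite expr0n.
have eta_gt0 : (0 : R) < (nnz E)%:R by rewrite ltr0n.
rewrite (eq_bigr (fun _ => (nnz E)%:R^-1)); last first.
  move=> xy; case: (hE xy.1 xy.2) => [-> | ->]; first by rewrite eqxx.
  by rewrite mul1r exprVn sqr_sqrtr // ltW.
rewrite sumr_const.
have -> : #|(fun xy : 'I_a * 'I_b => E xy.1 xy.2 != 0)| = nnz E.
  by rewrite /nnz cardsE.
by rewrite -[LHS]mulr_natr mulVf // gt_eqF.
Qed.

Theorem lemma7p1 (R : realType) (L : nat) (l q p : 'I_L -> nat) (m n : nat)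
  (E : forall j : 'I_L, 'I_(p j) -> 'M[R]_(l j, q j))
  (hp : forall j : 'I_L, (1 <= p j <= l j * q j)%N)
  (heta : forall (j : 'I_L) (k : 'I_(p j)), (1 <= etaE E k)%N)
  (hent : forall (j : 'I_L) (k : 'I_(p j)) (a : 'I_(l j)) (b : 'I_(q j)),
     E j k a b = 0 \/ E j k a b = 1 / Num.sqrt (etaE E k)%:R)
  (hdisj : forall (j : 'I_L) (k k' : 'I_(p j)) (a : 'I_(l j)) (b : 'I_(q j)),
     k != k' -> E j k a b != 0 -> E j k' a b = 0)
  (Ablk : midx p -> 'M[R]_(m, n))
  (A : bigmx R l q m n)
  (hA : forall r c, A r c =
     \sum_(i : midx p) kronL (fun j => E j (i j)) (sqrt_eta E i *: Ablk i) r c)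
  (That : tensor R p m n) :
  frob_mx (fun r c => A r c - M_E E That r c)
  = frob_tensor (fun a i b => T_E E Ablk a i b - That a i b).
Proof.
rewrite /frob_mx /frob_tensor; congr Num.sqrt.
set Q := fun i a b => T_E E Ablk a i b - That a i b.
set P := fun (i : midx p) (x : midx l) (z : midx q) =>
  \prod_j E j (i j) (x j) (z j).
have residualE r c : A r c - M_E E That r c = \sum_i P i r.1 c.1 * Q i r.2 c.2.
  rewrite hA /M_E -sumrB; apply: eq_bigr => i _.
  by rewrite /kronL /Q /T_E !mxE -mulrBr.
have disjE j (k k' : 'I_(p j)) x z : k != k' -> E j k x z * E j k' x z = 0.
  have [-> | /(hdisj _ _ _ _ _)] := eqVneq (E j k x z) 0; first by rewrite mul0r.
  by move=> /[apply] ->; rewrite mulr0.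
have P_unit i : frob2 (P i) = 1.
  rewrite /P (@frob2_prod _ _ _ _ (fun j x z => E j (i j) x z)) big1 // => j _.
  by apply: frob2_unit_pattern; [exact: heta | exact: hent].
transitivity (frob2 (fun r c => \sum_i P i r.1 c.1 * Q i r.2 c.2)).
  by apply: eq_bigr => r _; apply: eq_bigr => c _; rewrite residualE.
rewrite frob2_sum_kron_orth; last exact: (@prod_disjoint_supports _ _ _ _ _ E).
rewrite [RHS]exchange_big; apply: eq_bigr => i _.
by rewrite P_unit mul1r.
Qed.
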